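(* Assume the Green's functions $G_N[2T]$, $G_N[T]$, $G_{M_1}[T]$ exist. Let $\sigma_1,\sigma_2\in L^1(I)$, let $u_N$ be the unique solution of $Lu=\sigma_1$ a.e. on $I$, $u\in X_{N,T}$, and $u_{M_1}$ the unique solution of $Lu=\sigma_2$ a.e. on $I$, $u\in X_{M_1,T}$. Then: 1. If $G_N[2T]\ge0$ on $J\times J$ and $|\sigma_2(t)|\le\sigma_1(t)$ for a.e. $t\in I$, then $|u_{M_1}(t)|\le u_N(t)$ for all $t\in I$. 2. If $G_N[2T]\le0$ on $J\times J$ and $0\le\sigma_2(t)\le\sigma_1(t)$ for a.e. $t\in I$, then $u_N(t)\le0$ and $u_N(t)\le u_{M_1}(t)$ for all $t\in I$. 3. If $G_N[2T]\le0$ on $J\times J$ and $\sigma_1(t)\le\sigma_2(t)\le0$ for a.e. $t\in I$, then $u_N(t)\ge0$ and $u_{M_1}(t)\le u_N(t)$ for all $t\in I$.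
   Context: Fix $n\ge 1$, $T>0$, $I=[0,T]$, $J=[0,2T]$. $W^{2n,1}(K)$: $u\in C^{2n-1}(K)$ with $u^{(2n-1)}$ absolutely continuous. Let $a_0,\dots,a_{2n-1}\in L^\alpha(I)$, $\alpha\ge1$, $Lu=u^{(2n)}+\sum_{k=0}^{2n-1}a_ku^{(k)}$ on $I$. $\widetilde L u=u^{(2n)}+\sum_{k=0}^{n-1}(\hat a_{2k+1}u^{(2k+1)}+\tilde a_{2k}u^{(2k)})$ on $J$, where $\tilde a_{2k}=a_{2k}$, $\hat a_{2k+1}=a_{2k+1}$ on $I$, and $\tilde a_{2k}(t)=a_{2k}(2T-t)$, $\hat a_{2k+1}(t)=-a_{2k+1}(2T-t)$ for $t\in(T,2T]$. An operator $M$ is nonresonant in $X$ if $Mu=0$ a.e., $u\in X$ forces $u\equiv0$; its Green's function $G$ then gives the unique solution $u(t)=\int G(t,s)\sigma(s)ds$ of $Mu=\sigma$, $u\in X$. $X_{N,T}=\{u\in W^{2n,1}(I): u^{(2k+1)}(0)=u^{(2k+1)}(T)=0,\ k=0,\dots,n-1\}$ and $X_{M_1,T}=\{u\in W^{2n,1}(I): u^{(2k+1)}(0)=u^{(2k)}(T)=0,\ k=0,\dots,n-1\}$; $G_N[T]$, $G_{M_1}[T]$ are the Green's functions of $L$ on these spaces. $G_N[2T]$: Green's function of $\widetilde L$ on $\{u\in W^{2n,1}(J): u^{(2k+1)}(0)=u^{(2k+1)}(2T)=0,\ k=0,\dots,n-1\}$. *)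

From Stdlib Require Import Reals Lra.
Open Scope R_scope.

Fixpoint fsum (m : nat) (f : nat -> R) : R :=
  match m with O => 0 | S m' => fsum m' f + f m' end.

Definition null (A : R -> Prop) : Prop :=
  forall eps, 0 < eps ->
  exists l r : nat -> R,
    (forall k, l k <= r k) /\
    (forall x, A x -> exists k, l k < x < r k) /\
    (forall N, sum_f_R0 (fun k => r k - l k) N <= eps).

Definition ae (a b : R) (P : R -> Prop) : Prop :=
  null (fun x => a <= x <= b /\ ~ P x).

Definition ind (p q x : R) : R :=
  if Rle_dec p x then (if Rlt_dec x q then 1 else 0) else 0.

(* Lebesgue integral on [a,b] (Mikusinski): f has integral I iff
   f = sum c_k 1_[p_k,q_k) a.e. wherever the series converges absolutely,
   with sum |c_k|(q_k-p_k) < oo and I = sum c_k (q_k - p_k). *)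
Definition has_integral (a b : R) (f : R -> R) (I : R) : Prop :=
  exists c p q : nat -> R,
    (forall k, a <= p k /\ p k <= q k /\ q k <= b) /\
    (exists S, infinite_sum (fun k => Rabs (c k) * (q k - p k)) S) /\
    infinite_sum (fun k => c k * (q k - p k)) I /\
    ae a b (fun x =>
      (exists S, infinite_sum (fun k => Rabs (c k) * ind (p k) (q k) x) S) ->
      infinite_sum (fun k => c k * ind (p k) (q k) x) (f x)).

Definition L1 (a b : R) (f : R -> R) : Prop := exists I, has_integral a b f I.

Definition is_step (a b : R) (phi : R -> R) : Prop :=
  exists (N : nat) (c p q : nat -> R),
    (forall k, a <= p k /\ p k <= q k /\ q k <= b) /\
    forall x, phi x = fsum N (fun k => c k * ind (p k) (q k) x).

Definition measurable (a b : R) (f : R -> R) : Prop :=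
  exists phi : nat -> R -> R,
    (forall n, is_step a b (phi n)) /\
    ae a b (fun x => Un_cv (fun n => phi n x) (f x)).

(* x^al for x >= 0 (with 0^al = 0, al >= 1) *)
Definition rpow (x al : R) : R :=
  if Rlt_dec 0 x then Rpower x al else 0.

Definition Lp (al a b : R) (f : R -> R) : Prop :=
  measurable a b f /\ L1 a b (fun t => rpow (Rabs (f t)) al).

Definition deriv_within (a b : R) (f : R -> R) (x l : R) : Prop :=
  forall eps, 0 < eps -> exists delta, 0 < delta /\
    forall y, a <= y <= b -> y <> x -> Rabs (y - x) < delta ->
      Rabs ((f y - f x) / (y - x) - l) < eps.

Definition abs_cont (a b : R) (f : R -> R) : Prop :=
  forall eps, 0 < eps -> exists delta, 0 < delta /\
    forall (N : nat) (x y : nat -> R),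
      (forall k, (k <= N)%nat -> a <= x k /\ x k <= y k /\ y k <= b) ->
      (forall i j, (i < j <= N)%nat -> y i <= x j) ->
      sum_f_R0 (fun k => y k - x k) N < delta ->
      sum_f_R0 (fun k => Rabs (f (y k) - f (x k))) N < eps.

(* D k = k-th derivative (k = 0..m-1) of D 0 on [a,b], D (m-1) absolutely
   continuous: i.e. D 0 in W^{m,1}(a,b) with derivatives D k *)
Definition Wfam (a b : R) (m : nat) (D : nat -> R -> R) : Prop :=
  (forall k x, (S k < m)%nat -> a <= x <= b ->
      deriv_within a b (D k) x (D (S k) x)) /\
  abs_cont a b (D (pred m)).

Definition solves (a b : R) (m : nat) (c : nat -> R -> R)
    (D : nat -> R -> R) (sigma : R -> R) : Prop :=
  ae a b (fun t => exists d, deriv_within a b (D (pred m)) t d /\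
            d + fsum m (fun k => c k t * D k t) = sigma t).

Definition N_bc (n : nat) (a b : R) (D : nat -> R -> R) : Prop :=
  forall k, (k < n)%nat -> D (2 * k + 1)%nat a = 0 /\ D (2 * k + 1)%nat b = 0.

Definition M1_bc (n : nat) (a b : R) (D : nat -> R -> R) : Prop :=
  forall k, (k < n)%nat -> D (2 * k + 1)%nat a = 0 /\ D (2 * k)%nat b = 0.

Definition is_sol (n : nat) (a b : R) (c : nat -> R -> R)
    (bc : (nat -> R -> R) -> Prop) (sigma u : R -> R) : Prop :=
  exists D : nat -> R -> R,
    (forall x, a <= x <= b -> D O x = u x) /\
    Wfam a b (2 * n) D /\ bc D /\ solves a b (2 * n) c D sigma.

Definition nonresonant (n : nat) (a b : R) (c : nat -> R -> R)
    (bc : (nat -> R -> R) -> Prop) : Prop :=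
  forall u, is_sol n a b c bc (fun _ => 0) u -> forall t, a <= t <= b -> u t = 0.

Definition Green (n : nat) (a b : R) (c : nat -> R -> R)
    (bc : (nat -> R -> R) -> Prop) (G : R -> R -> R) : Prop :=
  nonresonant n a b c bc /\
  forall sigma, L1 a b sigma ->
    exists u, is_sol n a b c bc sigma u /\
      forall t, a <= t <= b -> has_integral a b (fun s => G t s * sigma s) (u t).

Definition refl_coef (T : R) (c : nat -> R -> R) (k : nat) (t : R) : R :=
  if Rle_dec t T then c k t
  else if Nat.even k then c k (2 * T - t) else - c k (2 * T - t).

(* Reflect about [T]: the even extension of [u_N] and the odd extension of [u_M1] to
   [[0, 2T]] are [W^{2n,1}] functions satisfying the Neumann conditions for the reflected
   operator, with right-hand sides the even extension of [sigma_1] and the odd extension of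
   [sigma_2].  By nonresonance, for every [a, b] the combination [a u_N + b u_M1] on [[0, T]]
   is [int G_N[2T](t, s) (a sigma_1~ + b sigma_2~)(s) ds], and the sign hypotheses make the
   integrand of one sign on both halves of [[0, 2T]].  The only analytic input is that an
   a.e. nonnegative function has nonnegative Mikusinski integral, proved by Dini's argument
   with upper semicontinuous step minorants and the Riemann integral. *)

From Coquelicot Require Import Coquelicot.
From Stdlib Require Import Reals Lra Lia Classical.
Open Scope R_scope.

(** * Finite sums and series *)

Lemma sum_f_R0_fsum f N : sum_f_R0 f N = fsum (S N) f.
Proof. induction N; simpl; [ring | rewrite IHN; simpl; ring]. Qed.

Lemma fsum_ext m f g : (forall k, (k < m)%nat -> f k = g k) -> fsum m f = fsum m g.
Proof. induction m; intros H; simpl; auto. rewrite IHm, H; auto; intros; apply H; lia. Qed.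

Lemma fsum_plus m f g : fsum m (fun k => f k + g k) = fsum m f + fsum m g.
Proof. induction m; simpl; [ring | rewrite IHm; ring]. Qed.

Lemma fsum_scal m a f : fsum m (fun k => a * f k) = a * fsum m f.
Proof. induction m; simpl; [ring | rewrite IHm; ring]. Qed.

Lemma fsum_le m f g : (forall k, (k < m)%nat -> f k <= g k) -> fsum m f <= fsum m g.
Proof.
  induction m; intros H; simpl; [lra|].
  assert (f m <= g m) by (apply H; lia).
  assert (fsum m f <= fsum m g) by (apply IHm; intros; apply H; lia). lra.
Qed.

Lemma fsum_nonneg m f : (forall k, 0 <= f k) -> 0 <= fsum m f.
Proof. intros H; induction m; simpl; [lra|]. specialize (H m); lra. Qed.

Lemma fsum_le_mono m m' f : (forall k, 0 <= f k) -> (m <= m')%nat -> fsum m f <= fsum m' f.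
Proof. intros H Hm; induction Hm; simpl; [lra|]. specialize (H m0); lra. Qed.

Lemma fsum_add m n f : fsum (m + n) f = fsum m f + fsum n (fun k => f (m + k)%nat).
Proof.
  induction n; simpl; [rewrite Nat.add_0_r; ring|].
  rewrite Nat.add_succ_r; simpl; rewrite IHn; ring.
Qed.

(* [infinite_sum], but with partial sums indexed by their number of terms ([fsum]) instead
   of their last index ([sum_f_R0]). *)
Definition has_sum (f : nat -> R) (S : R) : Prop :=
  forall eps, 0 < eps -> exists N, forall K, (N <= K)%nat -> Rabs (fsum K f - S) < eps.

Lemma infinite_sum_has_sum f S : infinite_sum f S <-> has_sum f S.
Proof.
  split; intros H eps He; destruct (H eps He) as [N HN].
  - exists (Datatypes.S N); intros K HK. destruct K; [lia|].
    rewrite <- sum_f_R0_fsum. apply HN; lia.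
  - exists N; intros n Hn. unfold Rdist. rewrite sum_f_R0_fsum. apply HN; lia.
Qed.

Lemma has_sum_ext f g S : (forall k, f k = g k) -> has_sum f S -> has_sum g S.
Proof.
  intros E H eps He; destruct (H eps He) as [N HN]; exists N; intros K HK.
  rewrite (fsum_ext K g f) by auto. auto.
Qed.

Lemma has_sum_scal a f S : has_sum f S -> has_sum (fun k => a * f k) (a * S).
Proof.
  intros H eps He. pose proof (Rabs_pos a).
  destruct (H (eps / (Rabs a + 1))) as [N HN]; [apply Rdiv_lt_0_compat; lra|].
  exists N; intros K HK. rewrite fsum_scal. specialize (HN K HK).
  replace (a * fsum K f - a * S) with (a * (fsum K f - S)) by ring. rewrite Rabs_mult.
  pose proof (Rabs_pos (fsum K f - S)).
  assert (Rabs (fsum K f - S) * (Rabs a + 1) < eps).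
  { apply (Rmult_lt_compat_r (Rabs a + 1)) in HN; [|lra].
    unfold Rdiv in HN; rewrite Rmult_assoc, Rinv_l in HN; lra. }
  nra.
Qed.

Lemma has_sum_0 f : (forall k, f k = 0) -> has_sum f 0.
Proof.
  intros H eps He; exists O; intros K _.
  replace (fsum K f) with 0; [rewrite Rminus_0_r, Rabs_R0; lra|].
  induction K; simpl; auto. rewrite H, <- IHK; ring.
Qed.

Lemma has_sum_ge f S B : has_sum f S -> (forall K, B <= fsum K f) -> B <= S.
Proof.
  intros H HB. destruct (Rle_dec B S) as [|n]; auto. exfalso.
  destruct (H (B - S)) as [N HN]; [lra|]. specialize (HN N (le_n _)). specialize (HB N).
  apply Rabs_def2 in HN. lra.
Qed.

Lemma has_sum_le_eventually f S N B :
  has_sum f S -> (forall K, (N <= K)%nat -> fsum K f <= B) -> S <= B.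
Proof.
  intros H HB. destruct (Rle_dec S B) as [|n]; auto. exfalso.
  destruct (H (S - B)) as [N' HN]; [lra|].
  specialize (HN (N + N')%nat ltac:(lia)). specialize (HB (N + N')%nat ltac:(lia)).
  apply Rabs_def2 in HN. lra.
Qed.

Lemma fsum_le_has_sum f S K : (forall k, 0 <= f k) -> has_sum f S -> fsum K f <= S.
Proof.
  intros P H. cut (0 <= S - fsum K f); [lra|].
  apply (has_sum_ge (fun k => f (K + k)%nat)).
  - intros eps He. destruct (H eps He) as [N HN]. exists N. intros K' HK'.
    specialize (HN (K + K')%nat ltac:(lia)). rewrite fsum_add in HN.
    replace (fsum K' (fun k => f (K + k)%nat) - (S - fsum K f))
      with (fsum K f + fsum K' (fun k => f (K + k)%nat) - S) by ring. auto.
  - intros; apply fsum_nonneg; auto.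
Qed.

Lemma has_sum_bounded f B :
  (forall k, 0 <= f k) -> (forall K, fsum K f <= B) -> exists S, has_sum f S.
Proof.
  intros P HB. destruct (growing_cv (fun n => fsum n f)) as [l Hl].
  - intro n; simpl. specialize (P n); lra.
  - exists B. intros x [n ->]. auto.
  - exists l. intros eps He. destruct (Hl eps He) as [N HN]. exists N. intros K HK. apply HN; lia.
Qed.

Definition interleave (f g : nat -> R) (k : nat) : R :=
  if Nat.even k then f (Nat.div2 k) else g (Nat.div2 k).

Lemma even_double m : Nat.even (2 * m) = true.
Proof. rewrite Nat.even_mul; reflexivity. Qed.

Lemma even_succ_double m : Nat.even (S (2 * m)) = false.
Proof. rewrite Nat.even_succ, <- Nat.negb_even, even_double; reflexivity. Qed.

Lemma interleave_even f g m : interleave f g (2 * m) = f m.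
Proof. unfold interleave; rewrite even_double, Nat.div2_double; auto. Qed.

Lemma interleave_odd f g m : interleave f g (S (2 * m)) = g m.
Proof. unfold interleave; rewrite even_succ_double, Nat.div2_succ_double; auto. Qed.

Lemma interleave_nonneg f g : (forall k, 0 <= f k) -> (forall k, 0 <= g k) ->
  forall k, 0 <= interleave f g k.
Proof. intros Pf Pg k; unfold interleave; destruct Nat.even; auto. Qed.

Lemma fsum_interleave f g m :
  fsum (2 * m) (interleave f g) = fsum m f + fsum m g /\
  fsum (S (2 * m)) (interleave f g) = fsum (S m) f + fsum m g.
Proof.
  induction m; [simpl; unfold interleave; simpl; split; ring|].
  destruct IHm as [H1 H2].
  assert (E : fsum (2 * S m) (interleave f g) = fsum (S m) f + fsum (S m) g).
  { replace (2 * S m)%nat with (S (S (2 * m))) by lia.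
    change (fsum (S (S (2 * m))) (interleave f g))
      with (fsum (S (2 * m)) (interleave f g) + interleave f g (S (2 * m))).
    rewrite H2, interleave_odd. simpl; ring. }
  split; [exact E|].
  change (fsum (S (2 * S m)) (interleave f g))
    with (fsum (2 * S m) (interleave f g) + interleave f g (2 * S m)).
  rewrite E, interleave_even. simpl; ring.
Qed.

Lemma has_sum_interleave f g S1 S2 :
  has_sum f S1 -> has_sum g S2 -> has_sum (interleave f g) (S1 + S2).
Proof.
  intros H1 H2 eps He. destruct (H1 (eps/2)) as [N1 HN1]; [lra|].
  destruct (H2 (eps/2)) as [N2 HN2]; [lra|]. exists (2 * (N1 + N2))%nat; intros K HK.
  destruct (Nat.Even_or_Odd K) as [[m ->]|[m ->]].
  - rewrite (proj1 (fsum_interleave f g m)).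
    specialize (HN1 m ltac:(lia)); specialize (HN2 m ltac:(lia)).
    replace (fsum m f + fsum m g - (S1 + S2)) with ((fsum m f - S1) + (fsum m g - S2)) by ring.
    eapply Rle_lt_trans; [apply Rabs_triang|]. lra.
  - replace (2 * m + 1)%nat with (S (2 * m)) by lia. rewrite (proj2 (fsum_interleave f g m)).
    specialize (HN1 (S m) ltac:(lia)); specialize (HN2 m ltac:(lia)).
    replace (fsum (S m) f + fsum m g - (S1 + S2))
      with ((fsum (S m) f - S1) + (fsum m g - S2)) by ring.
    eapply Rle_lt_trans; [apply Rabs_triang|]. lra.
Qed.

Lemma fsum_interleave_le f g K : (forall k, 0 <= f k) -> (forall k, 0 <= g k) ->
  fsum K (interleave f g) <= fsum K f + fsum K g.
Proof.
  intros Pf Pg. eapply Rle_trans.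
  - apply (fsum_le_mono K (2 * K)); [apply interleave_nonneg; auto | lia].
  - rewrite (proj1 (fsum_interleave f g K)). lra.
Qed.

Lemma has_sum_interleave_inv f g S :
  (forall k, 0 <= f k) -> (forall k, 0 <= g k) -> has_sum (interleave f g) S ->
  (exists S1, has_sum f S1) /\ (exists S2, has_sum g S2).
Proof.
  intros Pf Pg H. pose proof (interleave_nonneg f g Pf Pg) as Pi.
  split; [apply (has_sum_bounded f S) | apply (has_sum_bounded g S)]; auto; intro K;
    (eapply Rle_trans; [|apply (fsum_le_has_sum _ _ (2 * K) Pi H)]);
    rewrite (proj1 (fsum_interleave f g K));
    [pose proof (fsum_nonneg K g Pg) | pose proof (fsum_nonneg K f Pf)]; lra.
Qed.

(** * Null sets *)

Lemma null_subset (A B : R -> Prop) : (forall x, A x -> B x) -> null B -> null A.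
Proof.
  intros H N eps He. destruct (N eps He) as (l & r & H1 & H2 & H3).
  exists l, r; repeat split; auto.
Qed.

Lemma null_union (A B : R -> Prop) : null A -> null B -> null (fun x => A x \/ B x).
Proof.
  intros NA NB eps He. destruct (NA (eps/2)) as (l1 & r1 & H1 & H2 & H3); [lra|].
  destruct (NB (eps/2)) as (l2 & r2 & G1 & G2 & G3); [lra|].
  exists (interleave l1 l2), (interleave r1 r2). split; [|split].
  - intro k; unfold interleave; destruct Nat.even; auto.
  - intros x [Ax|Bx].
    + destruct (H2 x Ax) as [k Hk]. exists (2 * k)%nat. rewrite !interleave_even; auto.
    + destruct (G2 x Bx) as [k Hk]. exists (S (2 * k)). rewrite !interleave_odd; auto.
  - intro N. rewrite sum_f_R0_fsum.
    rewrite (fsum_ext _ _ (interleave (fun k => r1 k - l1 k) (fun k => r2 k - l2 k)))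
      by (intros k _; unfold interleave; destruct Nat.even; auto).
    eapply Rle_trans; [apply fsum_interleave_le|].
    + intro k; specialize (H1 k); lra.
    + intro k; specialize (G1 k); lra.
    + specialize (H3 N); specialize (G3 N); rewrite sum_f_R0_fsum in H3, G3; lra.
Qed.

Lemma sum_pow_half_le N : sum_f_R0 (pow (1/2)) N <= 2.
Proof.
  rewrite tech3 by lra. pose proof (pow_le (1/2) (S N) ltac:(lra)).
  apply (Rmult_le_reg_r (1 - 1/2)); [lra|].
  unfold Rdiv at 1. rewrite Rmult_assoc, Rinv_l by lra. lra.
Qed.

Lemma null_range (z : nat -> R) : null (fun x => exists k, x = z k).
Proof.
  intros eps He.
  assert (Hw : forall k, 0 < eps/4 * (1/2)^k)
    by (intro k; apply Rmult_lt_0_compat; [lra | apply pow_lt; lra]).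
  exists (fun k => z k - eps/4 * (1/2)^k), (fun k => z k + eps/4 * (1/2)^k).
  split; [|split].
  - intro k; specialize (Hw k); lra.
  - intros x [k ->]; exists k; specialize (Hw k); lra.
  - intro N. rewrite (sum_eq _ (fun i => (1/2)^i * (eps/2))) by (intros; field).
    rewrite <- scal_sum. pose proof (sum_pow_half_le N). nra.
Qed.

Lemma null_reflect (A : R -> Prop) c : null A -> null (fun x => A (c - x)).
Proof.
  intros NA eps He. destruct (NA eps He) as (l & r & H1 & H2 & H3).
  exists (fun k => c - r k), (fun k => c - l k). split; [|split].
  - intro k; specialize (H1 k); lra.
  - intros x Ax; destruct (H2 _ Ax) as [k Hk]; exists k; lra.
  - intro N. rewrite (sum_eq _ (fun k => r k - l k)) by (intros; ring). auto.
Qed.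

Lemma ae_impl a b (P Q : R -> Prop) :
  ae a b P -> (forall x, a <= x <= b -> P x -> Q x) -> ae a b Q.
Proof. intros H I. eapply null_subset; [|exact H]. intros x [Hx nQ]; split; auto. Qed.

Lemma ae_and a b P Q : ae a b P -> ae a b Q -> ae a b (fun x => P x /\ Q x).
Proof.
  intros HP HQ. eapply null_subset; [|exact (null_union _ _ HP HQ)].
  intros x [Hx nPQ]. destruct (classic (P x)); [right | left]; tauto.
Qed.

(** * Nonnegativity of the Mikusinski integral *)

Lemma is_RInt_ext_open (f g : R -> R) a b (I : R) : a <= b ->
  (forall x, a < x < b -> f x = g x) -> is_RInt f a b I -> is_RInt g a b I.
Proof.
  intros Hab E H. eapply is_RInt_ext; [|exact H].
  rewrite Rmin_left, Rmax_right by lra. auto.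
Qed.

Lemma is_RInt_const_R a b v : is_RInt (fun _ => v) a b ((b - a) * v).
Proof. exact (is_RInt_const a b v). Qed.

Lemma is_RInt_0 a b : is_RInt (fun _ => 0) a b 0.
Proof. pose proof (is_RInt_const_R a b 0) as H; rewrite Rmult_0_r in H; exact H. Qed.

Lemma is_RInt_fsum a b K (phi : nat -> R -> R) (v : nat -> R) :
  (forall k, is_RInt (phi k) a b (v k)) ->
  is_RInt (fun x => fsum K (fun k => phi k x)) a b (fsum K v).
Proof. intros H. induction K; simpl; [apply is_RInt_0 | apply (is_RInt_plus _ (phi K)); auto]. Qed.

Definition clamp (a b z : R) : R := Rmax a (Rmin z b).

Lemma clamp_diff_bounds a b l r : a <= b -> l <= r -> 0 <= clamp a b r - clamp a b l <= r - l.
Proof. intros; unfold clamp, Rmax, Rmin; repeat destruct Rle_dec; lra. Qed.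

Lemma clamp_diff_inside a b l r : a <= l -> l <= r -> r <= b -> clamp a b r - clamp a b l = r - l.
Proof. intros; unfold clamp, Rmax, Rmin; repeat destruct Rle_dec; lra. Qed.

Lemma is_RInt_plateau a b l r (phi : R -> R) : a <= b -> l <= r ->
  (forall x, l < x < r -> phi x = 1) -> (forall x, x < l \/ r < x -> phi x = 0) ->
  is_RInt phi a b (clamp a b r - clamp a b l).
Proof.
  intros Hab Hlr H1 H0. unfold clamp.
  set (L := Rmax a (Rmin l b)). set (Rr := Rmax a (Rmin r b)).
  assert (aL : a <= L) by apply Rmax_l.
  assert (LR : L <= Rr) by (unfold L, Rr, Rmax, Rmin; repeat destruct Rle_dec; lra).
  assert (Rb : Rr <= b) by (unfold Rr, Rmax, Rmin; repeat destruct Rle_dec; lra).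
  replace (Rr - L) with ((L - a) * 0 + (Rr - L) * 1 + (b - Rr) * 0) by ring.
  apply (is_RInt_Chasles phi a Rr b ((L - a) * 0 + (Rr - L) * 1) ((b - Rr) * 0));
    [apply (is_RInt_Chasles phi a L Rr ((L - a) * 0) ((Rr - L) * 1))|].
  - apply (is_RInt_ext_open (fun _ => 0)); auto; [|apply is_RInt_const_R].
    intros x Hx; symmetry; apply H0; left.
    revert Hx; unfold L, Rmax, Rmin; repeat destruct Rle_dec; lra.
  - apply (is_RInt_ext_open (fun _ => 1)); auto; [|apply is_RInt_const_R].
    intros x Hx; symmetry; apply H1.
    revert Hx; unfold L, Rr, Rmax, Rmin; repeat destruct Rle_dec; lra.
  - apply (is_RInt_ext_open (fun _ => 0)); auto; [|apply is_RInt_const_R].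
    intros x Hx; symmetry; apply H0; right.
    revert Hx; unfold Rr, Rmax, Rmin; repeat destruct Rle_dec; lra.
Qed.

Definition ind_open (l r x : R) : R :=
  if Rlt_dec l x then (if Rlt_dec x r then 1 else 0) else 0.
Definition ind_closed (l r x : R) : R :=
  if Rle_dec l x then (if Rle_dec x r then 1 else 0) else 0.

Lemma ind_bounds p q x : 0 <= ind p q x <= 1.
Proof. unfold ind; repeat first [destruct Rle_dec | destruct Rlt_dec]; lra. Qed.

Lemma ind_open_bounds p q x : 0 <= ind_open p q x <= 1.
Proof. unfold ind_open; repeat destruct Rlt_dec; lra. Qed.

Lemma ind_le_ind_open p q x : ind p q x <= ind_open (p - (q - p)) q x.
Proof. unfold ind, ind_open; repeat first [destruct Rle_dec | destruct Rlt_dec]; lra. Qed.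

Lemma is_RInt_ind_open a b l r : a <= b -> l <= r ->
  is_RInt (ind_open l r) a b (clamp a b r - clamp a b l).
Proof. intros; apply is_RInt_plateau; auto; intros x Hx; unfold ind_open; repeat destruct Rlt_dec; lra. Qed.

Lemma is_RInt_ind_closed a b l r : a <= b -> l <= r ->
  is_RInt (ind_closed l r) a b (clamp a b r - clamp a b l).
Proof. intros; apply is_RInt_plateau; auto; intros x Hx; unfold ind_closed; repeat destruct Rle_dec; lra. Qed.

(* Every value of [g] is a local minimum; for the step functions below this is lower
   semicontinuity. *)
Definition locmin (g : R -> R) : Prop :=
  forall x, exists tau, 0 < tau /\ forall y, Rabs (y - x) < tau -> g x <= g y.

Lemma locmin_plus g h : locmin g -> locmin h -> locmin (fun x => g x + h x).
Proof.
  intros G H x. destruct (G x) as [t1 [P1 H1]]. destruct (H x) as [t2 [P2 H2]].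
  exists (Rmin t1 t2); split; [apply Rmin_glb_lt; auto|]. intros y Hy.
  assert (Rabs (y - x) < t1) by (eapply Rlt_le_trans; [exact Hy|apply Rmin_l]).
  assert (Rabs (y - x) < t2) by (eapply Rlt_le_trans; [exact Hy|apply Rmin_r]).
  specialize (H1 y H0); specialize (H2 y H3); lra.
Qed.

Lemma locmin_ext g h : (forall x, g x = h x) -> locmin g -> locmin h.
Proof.
  intros E G x. destruct (G x) as [t [Pt Ht]].
  exists t; split; auto; intros y Hy; rewrite <- !E; auto.
Qed.

Lemma locmin_const v : locmin (fun _ => v).
Proof. intro x; exists 1; split; [lra|]; intros; lra. Qed.

Lemma locmin_fsum K (g : nat -> R -> R) :
  (forall k, locmin (g k)) -> locmin (fun x => fsum K (fun k => g k x)).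
Proof. intros H. induction K; simpl; [apply locmin_const | apply locmin_plus; auto]. Qed.

Lemma locmin_ind_open d l r : 0 <= d -> locmin (fun x => d * ind_open l r x).
Proof.
  intros Hd x. unfold ind_open. destruct (Rlt_dec l x); [destruct (Rlt_dec x r)|].
  - exists (Rmin (x - l) (r - x)); split; [apply Rmin_glb_lt; lra|]. intros y Hy.
    assert (Rabs (y - x) < x - l) by (eapply Rlt_le_trans; [exact Hy|apply Rmin_l]).
    assert (Rabs (y - x) < r - x) by (eapply Rlt_le_trans; [exact Hy|apply Rmin_r]).
    apply Rabs_def2 in H; apply Rabs_def2 in H0.
    repeat destruct Rlt_dec; lra.
  - exists 1; split; [lra|]; intros y _. repeat destruct Rlt_dec; nra.
  - exists 1; split; [lra|]; intros y _. repeat destruct Rlt_dec; nra.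
Qed.

Lemma locmin_neg_ind_closed d l r : 0 <= d -> locmin (fun x => - (d * ind_closed l r x)).
Proof.
  intros Hd x. unfold ind_closed. destruct (Rle_dec l x); [destruct (Rle_dec x r)|].
  - exists 1; split; [lra|]; intros y _. repeat destruct Rle_dec; nra.
  - exists (x - r); split; [lra|]. intros y Hy. apply Rabs_def2 in Hy.
    repeat destruct Rle_dec; lra.
  - exists (l - x); split; [lra|]. intros y Hy. apply Rabs_def2 in Hy.
    repeat destruct Rle_dec; lra.
Qed.

(* Dini's argument: the set of [z] on which some [F K] already exceeds [c0] on [a, z] is
   closed under passing to its supremum and beyond, by compactness. *)
Lemma dini_uniform a b (F : nat -> R -> R) c0 : a <= b ->
  (forall K K' x, (K <= K')%nat -> F K x <= F K' x) ->
  (forall K, locmin (F K)) ->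
  (forall x, a <= x <= b -> exists K, c0 < F K x) ->
  exists K, forall x, a <= x <= b -> c0 < F K x.
Proof.
  intros Hab Mon Loc Hyp.
  set (E := fun z => a <= z <= b /\ exists K, forall x, a <= x <= z -> c0 < F K x).
  assert (Ea : E a).
  { split; [lra|]. destruct (Hyp a ltac:(lra)) as [K HK]. exists K; intros x Hx.
    replace x with a by lra; auto. }
  destruct (completeness E) as [s [Hub Hlub]]; [exists b; intros z [Hz _]; lra | exists a; auto|].
  assert (as_ : a <= s) by (apply Hub; auto).
  assert (sb : s <= b) by (apply Hlub; intros z [Hz _]; lra).
  destruct (Hyp s ltac:(lra)) as [Ks HKs]. destruct (Loc Ks s) as [tau [Pt Ht]].
  assert (Hz : exists z, E z /\ s - tau/2 < z).
  { apply NNPP; intro N. assert (s <= s - tau/2); [|lra]. apply Hlub. intros z Ez.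
    destruct (Rle_dec z (s - tau/2)); auto. exfalso; apply N; exists z; split; auto; lra. }
  destruct Hz as [z [[Hz [Kz HKz]] Hzs]].
  assert (Ez' : E (Rmin b (s + tau/2))).
  { split; [unfold Rmin; destruct Rle_dec; lra|].
    exists (Kz + Ks)%nat. intros x Hx. destruct (Rle_dec x z).
    - eapply Rlt_le_trans; [apply (HKz x); lra | apply Mon; lia].
    - eapply Rlt_le_trans; [|apply (Mon Ks); lia]. eapply Rlt_le_trans; [exact HKs|]. apply Ht.
      assert (x <= s + tau/2) by (eapply Rle_trans; [apply Hx|apply Rmin_r]).
      apply Rabs_def1; lra. }
  assert (Rmin b (s + tau / 2) <= s) by (apply Hub; auto).
  assert (Rmin b (s + tau/2) = b) by (unfold Rmin in *; destruct Rle_dec; lra).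
  destruct Ez' as [_ [K HK]]. exists K. intros x Hx; apply HK; lra.
Qed.

Lemma exists_point_above_series a b (d1 l1 r1 d2 l2 r2 : nat -> R) (H : R -> R) IH S1 S2 e :
  a <= b -> (forall k, 0 <= d1 k /\ l1 k <= r1 k) -> (forall k, 0 <= d2 k /\ l2 k <= r2 k) ->
  locmin (fun x => - H x) -> is_RInt H a b IH ->
  (forall K, fsum K (fun k => d1 k * (r1 k - l1 k)) <= S1) ->
  (forall K, fsum K (fun k => d2 k * (r2 k - l2 k)) <= S2) ->
  S1 + S2 < IH - e * (b - a) ->
  exists x, a <= x <= b /\ forall K,
    fsum K (fun k => d1 k * ind_open (l1 k) (r1 k) x) +
    fsum K (fun k => d2 k * ind_open (l2 k) (r2 k) x) <= H x - e.
Proof.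
  intros Hab P1 P2 LH RH B1 B2 Hlt. apply NNPP; intro Hnot.
  set (F := fun K x => fsum K (fun k => d1 k * ind_open (l1 k) (r1 k) x) +
                       fsum K (fun k => d2 k * ind_open (l2 k) (r2 k) x) - H x).
  assert (Pos : forall d l r x, 0 <= d -> 0 <= d * ind_open l r x)
    by (intros; pose proof (ind_open_bounds l r x); nra).
  destruct (dini_uniform a b F (- e) Hab) as [K HK].
  - intros K K' x HKK'. unfold F.
    pose proof (fsum_le_mono K K' _ (fun k => Pos (d1 k) (l1 k) (r1 k) x (proj1 (P1 k))) HKK').
    pose proof (fsum_le_mono K K' _ (fun k => Pos (d2 k) (l2 k) (r2 k) x (proj1 (P2 k))) HKK').
    lra.
  - intro K. unfold F. apply (locmin_plus (fun x => _ + _) (fun x => - H x)); auto.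
    apply locmin_plus; apply (locmin_fsum K (fun k x => _ * ind_open _ _ x));
      intro k; apply locmin_ind_open; [apply P1 | apply P2].
  - intros x Hx. apply NNPP; intro Nx. apply Hnot. exists x; split; auto.
    intro K. apply Rnot_lt_le; intro L. apply Nx. exists K. unfold F; lra.
  - set (V := fun d l r => fsum K (fun k => d k * (clamp a b (r k) - clamp a b (l k)))).
    assert (RV : forall d l r, (forall k, l k <= r k) ->
      is_RInt (fun x => fsum K (fun k => d k * ind_open (l k) (r k) x)) a b (V d l r)).
    { intros d l r Hlr. apply (is_RInt_fsum a b K (fun k x => d k * ind_open (l k) (r k) x)).
      intro k. apply (is_RInt_scal (ind_open (l k) (r k)) a b (d k) (clamp a b (r k) - clamp a b (l k))).
      apply is_RInt_ind_open; auto. }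
    assert (LV : forall d l r, (forall k, 0 <= d k /\ l k <= r k) ->
      V d l r <= fsum K (fun k => d k * (r k - l k))).
    { intros d l r P. apply fsum_le; intros k _. destruct (P k).
      pose proof (clamp_diff_bounds a b (l k) (r k) Hab H1). nra. }
    assert (R3 : is_RInt (fun x => H x + - e) a b (IH + (b - a) * - e))
      by (apply (is_RInt_plus H (fun _ => - e) a b IH ((b - a) * - e)); auto; apply is_RInt_const_R).
    assert (IH + (b - a) * - e <= V d1 l1 r1 + V d2 l2 r2).
    { apply (is_RInt_le _ _ a b _ _ Hab R3
        (is_RInt_plus _ _ _ _ _ _ (RV d1 l1 r1 (fun k => proj2 (P1 k))) (RV d2 l2 r2 (fun k => proj2 (P2 k))))).
      intros x Hx. specialize (HK x ltac:(lra)). unfold F in HK. unfold plus; simpl. lra. }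
    pose proof (LV d1 l1 r1 P1). pose proof (LV d2 l2 r2 P2).
    specialize (B1 K); specialize (B2 K). lra.
Qed.

Lemma has_sum_le_head_tail (u : nat -> R) w N B :
  (forall K, fsum K (fun k => Rabs (u (N + k)%nat)) <= B) ->
  ((exists S, has_sum (fun k => Rabs (u k)) S) -> has_sum u w) ->
  w <= fsum N u + B.
Proof.
  intros Htail Hrep.
  assert (Hhead : fsum N u <= fsum N (fun k => Rabs (u k))) by (apply fsum_le; intros; apply Rle_abs).
  assert (Hu : has_sum u w).
  { apply Hrep, (has_sum_bounded _ (fsum N (fun k => Rabs (u k)) + B)); [intro; apply Rabs_pos|].
    intro K. eapply Rle_trans; [apply (fsum_le_mono K (N + K)); [intro; apply Rabs_pos | lia]|].
    rewrite fsum_add. specialize (Htail K). lra. }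
  apply (has_sum_le_eventually _ _ N _ Hu). intros K HK.
  replace K with (N + (K - N))%nat by lia. rewrite fsum_add.
  assert (fsum (K - N) (fun k => u (N + k)%nat) <= fsum (K - N) (fun k => Rabs (u (N + k)%nat)))
    by (apply fsum_le; intros; apply Rle_abs).
  specialize (Htail (K - N)%nat). lra.
Qed.

(* [h] is an upper semicontinuous minorant of [- c * 1_[p,q)] whose integral is within
   [2 th |c|] of [- c (q - p)]: shrink [[p,q)] to a closed interval if [c < 0], and enlarge
   it to an open one otherwise. *)
Lemma usc_minorant a b c p q th : a <= p -> p <= q -> q <= b -> 0 < th ->
  exists h v, locmin (fun x => - h x) /\ is_RInt h a b v /\
    - c * (q - p) - 2 * th * Rabs c <= v /\
    forall x, h x <= Rabs c /\ h x <= - c * ind p q x.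
Proof.
  intros Hap Hpq Hqb Hth. destruct (Rlt_dec c 0) as [cn|cp]; [destruct (Rlt_dec p q) as [pq|pq]|].
  - set (m := Rmin th ((q - p) / 2)).
    assert (Hm : 0 < m /\ m <= th /\ m <= (q - p) / 2)
      by (unfold m, Rmin; destruct Rle_dec; lra).
    exists (fun x => - c * ind_closed (p + m) (q - m) x),
      (- c * (clamp a b (q - m) - clamp a b (p + m))). split; [|split; [|split]].
    + apply locmin_neg_ind_closed; lra.
    + apply (is_RInt_scal (ind_closed (p + m) (q - m)) a b (- c)), is_RInt_ind_closed; lra.
    + rewrite clamp_diff_inside, Rabs_left by lra. nra.
    + intro x. rewrite Rabs_left by lra. unfold ind_closed, ind.
      repeat first [destruct Rle_dec | destruct Rlt_dec]; nra.
  - exists (fun _ => 0), 0. split; [|split; [|split]].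
    + apply locmin_const.
    + apply is_RInt_0.
    + rewrite Rabs_left by lra. nra.
    + intro x. pose proof (Rabs_pos c). unfold ind.
      repeat first [destruct Rle_dec | destruct Rlt_dec]; nra.
  - exists (fun x => - c * ind_open (p - th) (q + th) x),
      (- c * (clamp a b (q + th) - clamp a b (p - th))). split; [|split; [|split]].
    + apply (locmin_ext (fun x => c * ind_open (p - th) (q + th) x)); [intro; ring|].
      apply locmin_ind_open; lra.
    + apply (is_RInt_scal (ind_open (p - th) (q + th)) a b (- c)), is_RInt_ind_open; lra.
    + pose proof (clamp_diff_bounds a b (p - th) (q + th) ltac:(lra) ltac:(lra)).
      rewrite Rabs_right by lra. nra.
    + intro x. rewrite Rabs_right by lra. unfold ind_open, ind.
      repeat first [destruct Rle_dec | destruct Rlt_dec]; nra.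
Qed.

Lemma usc_minorant_fsum a b N (c p q : nat -> R) th :
  (forall k, a <= p k /\ p k <= q k /\ q k <= b) -> 0 < th ->
  exists H IH, locmin (fun x => - H x) /\ is_RInt H a b IH /\
    - fsum N (fun k => c k * (q k - p k)) - 2 * th * fsum N (fun k => Rabs (c k)) <= IH /\
    forall x, H x <= fsum N (fun k => Rabs (c k)) /\
              H x <= - fsum N (fun k => c k * ind (p k) (q k) x).
Proof.
  intros Hb Hth. induction N as [|N IHN]; simpl.
  - exists (fun _ => 0), 0. split; [|split; [|split]]; [apply locmin_const | apply is_RInt_0 | lra | intros; lra].
  - destruct IHN as (H & IH & LH & RH & VH & BH).
    destruct (Hb N) as (h1 & h2 & h3).
    destruct (usc_minorant a b (c N) (p N) (q N) th h1 h2 h3 Hth) as (h & v & Lh & Rh & Vh & Bh).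
    exists (fun x => H x + h x), (IH + v). split; [|split; [|split]].
    + apply (locmin_ext (fun x => - H x + - h x)); [intro; ring | apply locmin_plus; auto].
    + apply (is_RInt_plus H h a b IH v); auto.
    + lra.
    + intro x. specialize (BH x); specialize (Bh x). lra.
Qed.

Lemma fsum_scaled_cover_le (l r : nat -> R) M eps : 0 < M -> 0 < eps ->
  (forall N, sum_f_R0 (fun k => r k - l k) N <= eps / M) ->
  forall K, fsum K (fun k => M * (r k - l k)) <= eps.
Proof.
  intros HM He H K. rewrite fsum_scal.
  replace eps with (M * (eps / M)) by (field; lra).
  apply Rmult_le_compat_l; [lra|]. destruct K as [|K].
  - simpl. apply Rlt_le, Rdiv_lt_0_compat; lra.
  - rewrite <- sum_f_R0_fsum. apply H.
Qed.

Lemma fsum_tail_le_of_open (c p q l r lE rE : nat -> R) N M h x : 0 <= M ->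
  (forall k, ind (p (N + k)%nat) (q (N + k)%nat) x <= ind_open (l k) (r k) x) ->
  (forall K, fsum K (fun k => Rabs (c (N + k)%nat) * ind_open (l k) (r k) x) +
             fsum K (fun k => M * ind_open (lE k) (rE k) x) <= h) ->
  forall K, fsum K (fun k => Rabs (c (N + k)%nat) * ind (p (N + k)%nat) (q (N + k)%nat) x) <= h.
Proof.
  intros HM Hind Hdom K. specialize (Hdom K).
  assert (0 <= fsum K (fun k => M * ind_open (lE k) (rE k) x))
    by (apply fsum_nonneg; intro k; pose proof (ind_open_bounds (lE k) (rE k) x); nra).
  apply Rle_trans with (fsum K (fun k => Rabs (c (N + k)%nat) * ind_open (l k) (r k) x)); [|lra].
  apply fsum_le; intros k _. apply Rmult_le_compat_l; [apply Rabs_pos | apply Hind].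
Qed.

Lemma not_in_cover_of_dominated (g l r : nat -> R) M h x : 0 <= M -> h < M ->
  (forall k, 0 <= g k) ->
  (forall K, fsum K g + fsum K (fun k => M * ind_open (l k) (r k) x) <= h) ->
  forall k, ~ (l k < x < r k).
Proof.
  intros HM Hh Pg Hdom j Hj.
  assert (E1 : ind_open (l j) (r j) x = 1) by (unfold ind_open; do 2 (destruct Rlt_dec; try lra)).
  assert (0 <= fsum j (fun k => M * ind_open (l k) (r k) x))
    by (apply fsum_nonneg; intro k; pose proof (ind_open_bounds (l k) (r k) x); nra).
  pose proof (fsum_nonneg (S j) g Pg) as Hg. specialize (Hdom (S j)). simpl in Hdom, Hg.
  rewrite E1 in Hdom. lra.
Qed.

Lemma ind_series_le (c p q : nat -> R) v x N B :
  (forall K, fsum K (fun k => Rabs (c (N + k)%nat) * ind (p (N + k)%nat) (q (N + k)%nat) x) <= B) ->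
  ((exists S, infinite_sum (fun k => Rabs (c k) * ind (p k) (q k) x) S) ->
     infinite_sum (fun k => c k * ind (p k) (q k) x) v) ->
  v <= fsum N (fun k => c k * ind (p k) (q k) x) + B.
Proof.
  intros Htail Hrep.
  assert (Eabs : forall k, Rabs (c k * ind (p k) (q k) x) = Rabs (c k) * ind (p k) (q k) x)
    by (intro k; rewrite Rabs_mult, (Rabs_right (ind _ _ _)) by apply Rle_ge, ind_bounds; auto).
  apply has_sum_le_head_tail.
  - intro K. rewrite (fsum_ext K _ (fun k => Rabs (c (N + k)%nat) * ind (p (N + k)%nat) (q (N + k)%nat) x))
      by (intros; apply Eabs). auto.
  - intros [S HS]. apply infinite_sum_has_sum, Hrep. exists S.
    apply infinite_sum_has_sum. eapply has_sum_ext; [|exact HS]. auto.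
Qed.

Lemma has_sum_truncate f g S1 S2 eps : 0 < eps -> (forall k, 0 <= f k) ->
  has_sum f S1 -> has_sum g S2 ->
  exists N, (forall K, fsum K (fun k => f (N + k)%nat) <= eps) /\ Rabs (fsum N g - S2) < eps.
Proof.
  intros He P Hf Hg. destruct (Hf eps He) as [N1 HN1]. destruct (Hg eps He) as [N2 HN2].
  exists (N1 + N2)%nat. split; [|apply HN2; lia].
  intro K. pose proof (fsum_le_has_sum f S1 (N1 + N2 + K) P Hf) as HS.
  rewrite fsum_add in HS. specialize (HN1 (N1 + N2)%nat ltac:(lia)). apply Rabs_def2 in HN1. lra.
Qed.

(* Off a small cover of [E], a point is found at which the tail of the series is dominated
   by an upper semicontinuous minorant of the negated head, whose integral is close to [- I]. *)
Lemma exists_point_tail_dominated a b (c p q : nat -> R) SA I (E : R -> Prop) :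
  a < b -> (forall k, a <= p k /\ p k <= q k /\ q k <= b) ->
  has_sum (fun k => Rabs (c k) * (q k - p k)) SA -> has_sum (fun k => c k * (q k - p k)) I ->
  I < 0 -> null E ->
  exists x N B, a <= x <= b /\ ~ E x /\ fsum N (fun k => c k * ind (p k) (q k) x) + B < 0 /\
    forall K, fsum K (fun k => Rabs (c (N + k)%nat) * ind (p (N + k)%nat) (q (N + k)%nat) x) <= B.
Proof.
  intros Hab Hb HSA HI HI0 HE.
  set (dl := - I). assert (Hdl : 0 < dl) by (unfold dl; lra).
  assert (Plen : forall k, 0 <= Rabs (c k) * (q k - p k))
    by (intro k; destruct (Hb k) as (h1 & h2 & h3); pose proof (Rabs_pos (c k)); nra).
  destruct (has_sum_truncate _ _ _ _ (dl / 8) ltac:(lra) Plen HSA HI) as (N & Htail & Hhead).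
  set (B0 := fsum N (fun k => Rabs (c k))).
  assert (HB0 : 0 <= B0) by (apply fsum_nonneg; intro; apply Rabs_pos).
  set (M := B0 + 1).
  destruct (HE (dl / 4 / M)) as (lE & rE & HE1 & HE2 & HE3);
    [apply Rdiv_lt_0_compat; unfold M; lra|].
  set (th := dl / (16 * M)).
  assert (Hth : 0 < th /\ 2 * th * B0 <= dl / 8).
  { unfold th; split; [apply Rdiv_lt_0_compat; unfold M; lra|].
    apply (Rmult_le_reg_r (16 * M)); [unfold M; lra|].
    replace (2 * (dl / (16 * M)) * B0 * (16 * M)) with (2 * dl * B0) by (field; unfold M; lra).
    unfold M; nra. }
  destruct (usc_minorant_fsum a b N c p q th Hb (proj1 Hth)) as (H & IH & LH & RH & HIH & HHx).
  fold B0 in HIH, HHx.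
  set (e := dl / (8 * (b - a))).
  assert (He : 0 < e) by (unfold e; apply Rdiv_lt_0_compat; lra).
  set (l1 := fun k => p (N + k)%nat - (q (N + k)%nat - p (N + k)%nat)).
  set (r1 := fun k => q (N + k)%nat).
  destruct (exists_point_above_series a b (fun k => Rabs (c (N + k)%nat)) l1 r1
    (fun _ => M) lE rE H IH (dl / 4) (dl / 4) e) as (x & Hx & Hdom); try lra; auto.
  - intro k; split; [apply Rabs_pos|]. unfold l1, r1; destruct (Hb (N + k)%nat); lra.
  - intro k; split; [unfold M; lra | auto].
  - intro K. specialize (Htail K). unfold l1, r1.
    rewrite (fsum_ext K _ (fun k => 2 * (Rabs (c (N + k)%nat) * (q (N + k)%nat - p (N + k)%nat))))
      by (intros; ring).
    rewrite fsum_scal. lra.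
  - apply fsum_scaled_cover_le; unfold M; auto; lra.
  - apply Rabs_def2 in Hhead.
    replace (e * (b - a)) with (dl / 8) by (unfold e; field; lra). unfold dl in *; lra.
  - destruct (HHx x) as [HxB0 Hxhead].
    exists x, N, (H x - e). split; [|split; [|split]]; auto; try lra.
    + intro Ex. destruct (HE2 x Ex) as [j Hj].
      refine (not_in_cover_of_dominated _ lE rE M (H x - e) x _ _ _ Hdom j Hj); unfold M; try lra.
      intro k. pose proof (Rabs_pos (c (N + k)%nat)). pose proof (ind_open_bounds (l1 k) (r1 k) x). nra.
    + apply (fsum_tail_le_of_open c p q l1 r1 lE rE N M); [unfold M; lra | | exact Hdom].
      intro k; apply ind_le_ind_open.
Qed.

Lemma integral_nonneg a b f I :
  a < b -> has_integral a b f I -> ae a b (fun x => 0 <= f x) -> 0 <= I.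
Proof.
  intros Hab (c & p & q & Hb & [SA HSA] & HI & Hrep) Hpos.
  apply infinite_sum_has_sum in HSA, HI.
  destruct (Rle_dec 0 I) as [|nI]; auto. exfalso.
  destruct (exists_point_tail_dominated a b c p q SA I _ Hab Hb HSA HI ltac:(lra) (ae_and _ _ _ _ Hrep Hpos))
    as (x & N & B & Hx & Hgood & Hneg & Htail).
  assert (Hfx : ((exists S, infinite_sum (fun k => Rabs (c k) * ind (p k) (q k) x) S) ->
      infinite_sum (fun k => c k * ind (p k) (q k) x) (f x)) /\ 0 <= f x)
    by (apply NNPP; intro np; apply Hgood; auto).
  pose proof (ind_series_le c p q (f x) x N B Htail (proj1 Hfx)). lra.
Qed.

(** * Linearity and mirror extension of integrable functions *)

Lemma has_sum_scal_rep al (c i : nat -> R) v :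
  (forall k, 0 <= i k) ->
  (exists S, has_sum (fun k => Rabs (al * c k) * i k) S) ->
  ((exists S, has_sum (fun k => Rabs (c k) * i k) S) -> has_sum (fun k => c k * i k) v) ->
  has_sum (fun k => al * c k * i k) (al * v).
Proof.
  intros Pi [S HS] H. destruct (Req_dec al 0) as [->|nz].
  - rewrite Rmult_0_l. apply has_sum_0; intro; ring.
  - apply (has_sum_ext (fun k => al * (c k * i k))); [intro; ring|]. apply has_sum_scal, H.
    exists (/ Rabs al * S). apply (has_sum_ext (fun k => / Rabs al * (Rabs (al * c k) * i k))).
    + intro k. rewrite Rabs_mult. field. apply Rabs_no_R0; auto.
    + apply has_sum_scal; auto.
Qed.

Lemma interleave_map3 (h : R -> R -> R -> R) (c1 c2 p1 p2 q1 q2 : nat -> R) k :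
  h (interleave c1 c2 k) (interleave p1 p2 k) (interleave q1 q2 k) =
  interleave (fun k => h (c1 k) (p1 k) (q1 k)) (fun k => h (c2 k) (p2 k) (q2 k)) k.
Proof. unfold interleave; destruct Nat.even; auto. Qed.

Lemma abs_ind_nonneg c p q x : 0 <= Rabs c * ind p q x.
Proof. pose proof (Rabs_pos c); pose proof (ind_bounds p q x); nra. Qed.

Lemma has_integral_interleave a b I1 I2 (E : R -> Prop) (g : R -> R) (c1 p1 q1 c2 p2 q2 : nat -> R) :
  (forall k, a <= p1 k /\ p1 k <= q1 k /\ q1 k <= b) ->
  (forall k, a <= p2 k /\ p2 k <= q2 k /\ q2 k <= b) ->
  (exists S, has_sum (fun k => Rabs (c1 k) * (q1 k - p1 k)) S) ->
  (exists S, has_sum (fun k => Rabs (c2 k) * (q2 k - p2 k)) S) ->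
  has_sum (fun k => c1 k * (q1 k - p1 k)) I1 ->
  has_sum (fun k => c2 k * (q2 k - p2 k)) I2 ->
  null E ->
  (forall x, a <= x <= b -> ~ E x ->
     (exists S, has_sum (fun k => Rabs (c1 k) * ind (p1 k) (q1 k) x) S) ->
     (exists S, has_sum (fun k => Rabs (c2 k) * ind (p2 k) (q2 k) x) S) ->
     exists v1 v2, has_sum (fun k => c1 k * ind (p1 k) (q1 k) x) v1 /\
                   has_sum (fun k => c2 k * ind (p2 k) (q2 k) x) v2 /\ g x = v1 + v2) ->
  has_integral a b g (I1 + I2).
Proof.
  intros B1 B2 [S1 A1] [S2 A2] C1 C2 NE Hx.
  exists (interleave c1 c2), (interleave p1 p2), (interleave q1 q2). split; [|split; [|split]].
  - intro k; unfold interleave; destruct Nat.even; auto.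
  - exists (S1 + S2). apply infinite_sum_has_sum.
    eapply has_sum_ext; [intro k; symmetry; apply (interleave_map3 (fun c p q => Rabs c * (q - p)))|].
    apply has_sum_interleave; auto.
  - apply infinite_sum_has_sum.
    eapply has_sum_ext; [intro k; symmetry; apply (interleave_map3 (fun c p q => c * (q - p)))|].
    apply has_sum_interleave; auto.
  - eapply null_subset; [|exact NE]. intros x [Hxab Hn]. apply NNPP; intro nE. apply Hn.
    intros [S HS]. apply infinite_sum_has_sum in HS. apply infinite_sum_has_sum.
    eapply has_sum_ext in HS; [|intro k; apply (interleave_map3 (fun c p q => Rabs c * ind p q x))].
    destruct (has_sum_interleave_inv _ _ _ (fun k => abs_ind_nonneg (c1 k) (p1 k) (q1 k) x)
      (fun k => abs_ind_nonneg (c2 k) (p2 k) (q2 k) x) HS) as [H1 H2].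
    destruct (Hx x Hxab nE H1 H2) as (v1 & v2 & V1 & V2 & Eg). rewrite Eg.
    eapply has_sum_ext; [intro k; symmetry; apply (interleave_map3 (fun c p q => c * ind p q x))|].
    apply has_sum_interleave; auto.
Qed.

Lemma has_integral_lin a b f g I J al be :
  has_integral a b f I -> has_integral a b g J ->
  has_integral a b (fun x => al * f x + be * g x) (al * I + be * J).
Proof.
  intros (c1 & p1 & q1 & B1 & [S1 A1] & C1 & R1) (c2 & p2 & q2 & B2 & [S2 A2] & C2 & R2).
  apply infinite_sum_has_sum in A1, A2, C1, C2.
  set (rep := fun c p q (h : R -> R) x =>
    (exists S, infinite_sum (fun k => Rabs (c k) * ind (p k) (q k) x) S) ->
    infinite_sum (fun k => c k * ind (p k) (q k) x) (h x)).
  apply (has_integral_interleave a b _ _ (fun x => a <= x <= b /\ ~ (rep c1 p1 q1 f x /\ rep c2 p2 q2 g x))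
    _ (fun k => al * c1 k) p1 q1 (fun k => be * c2 k) p2 q2); auto.
  - exists (Rabs al * S1). eapply has_sum_ext; [|apply (has_sum_scal (Rabs al)); exact A1].
    intro k; simpl; rewrite Rabs_mult; ring.
  - exists (Rabs be * S2). eapply has_sum_ext; [|apply (has_sum_scal (Rabs be)); exact A2].
    intro k; simpl; rewrite Rabs_mult; ring.
  - eapply has_sum_ext; [|apply (has_sum_scal al); exact C1]. intro k; simpl; ring.
  - eapply has_sum_ext; [|apply (has_sum_scal be); exact C2]. intro k; simpl; ring.
  - exact (ae_and _ _ _ _ R1 R2).
  - intros x Hxab nE H1 H2.
    assert (HH : rep c1 p1 q1 f x /\ rep c2 p2 q2 g x) by (apply NNPP; intro n; apply nE; auto).
    destruct HH as [HH1 HH2].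
    exists (al * f x), (be * g x). split; [|split; [|auto]].
    + apply (has_sum_scal_rep al c1 (fun k => ind (p1 k) (q1 k) x)); auto; [intro; apply ind_bounds|].
      intros [S HS]. apply infinite_sum_has_sum, HH1. exists S; apply infinite_sum_has_sum; auto.
    + apply (has_sum_scal_rep be c2 (fun k => ind (p2 k) (q2 k) x)); auto; [intro; apply ind_bounds|].
      intros [S HS]. apply infinite_sum_has_sum, HH2. exists S; apply infinite_sum_has_sum; auto.
Qed.

(* [e = 1] gives the even and [e = -1] the odd extension of [s] about [T] to [[0, 2T]]. *)
Definition mirror_ext (T e : R) (s : R -> R) (t : R) : R :=
  if Rle_dec t T then s t else e * s (2 * T - t).

Lemma ind_mirror T p q x : 2 * T - x <> p -> 2 * T - x <> q ->
  ind (2 * T - q) (2 * T - p) x = ind p q (2 * T - x).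
Proof. intros. unfold ind. repeat destruct Rle_dec; repeat destruct Rlt_dec; lra. Qed.

(* The series for [s] is merged with its mirror image; the reflected half-open intervals
   are open on the wrong side, which only matters on the countable set of their endpoints. *)
Lemma L1_mirror_ext T e s : 0 < T -> L1 0 T s -> L1 0 (2 * T) (mirror_ext T e s).
Proof.
  intros HT [I (c & p & q & B & [SA A] & C & Rp)]. apply infinite_sum_has_sum in A, C.
  set (bad := fun x => 0 <= x <= T /\ ~ ((exists S, infinite_sum (fun k => Rabs (c k) * ind (p k) (q k) x) S) ->
      infinite_sum (fun k => c k * ind (p k) (q k) x) (s x))).
  exists (I + e * I).
  apply (has_integral_interleave 0 (2 * T) I (e * I)
    (fun x => x = T \/ bad x \/ bad (2 * T - x) \/
      (exists k, x = 2 * T - p k) \/ (exists k, x = 2 * T - q k))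
    _ c p q (fun k => e * c k) (fun k => 2 * T - q k) (fun k => 2 * T - p k)).
  - intro k; destruct (B k); lra.
  - intro k; destruct (B k); lra.
  - exists SA; auto.
  - exists (Rabs e * SA). eapply has_sum_ext; [|apply (has_sum_scal (Rabs e)); exact A].
    intro k; rewrite Rabs_mult; ring.
  - auto.
  - eapply has_sum_ext; [|apply (has_sum_scal e); exact C]. intro k; simpl; ring.
  - repeat apply null_union.
    + apply (null_subset _ (fun x => exists k : nat, x = T)); [intros x ->; exists O; auto|].
      apply (null_range (fun _ => T)).
    + exact Rp.
    + apply (null_reflect _ (2 * T) Rp).
    + apply (null_range (fun k => 2 * T - p k)).
    + apply (null_range (fun k => 2 * T - q k)).
  - intros x Hx nE H1 H2. unfold mirror_ext. destruct (Rle_dec x T) as [xT|xT].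
    + assert (xT' : x < T) by (destruct (Req_dec x T); [exfalso; apply nE; left; auto | lra]).
      exists (s x), 0. split; [|split; [|ring]].
      * apply infinite_sum_has_sum. apply NNPP; intro n. apply nE; right; left; split; [lra|].
        intro HH. apply n, HH. destruct H1 as [S HS]; exists S; apply infinite_sum_has_sum; auto.
      * apply has_sum_0. intro k. destruct (B k). unfold ind. destruct Rle_dec; [lra|ring].
    + exists 0, (e * s (2 * T - x)). split; [|split; [|ring]].
      * apply has_sum_0. intro k. destruct (B k). unfold ind.
        destruct Rle_dec; [|ring]. destruct Rlt_dec; [lra|ring].
      * assert (Hp : forall k, 2 * T - x <> p k)
          by (intros k E; apply nE; right; right; right; left; exists k; lra).
        assert (Hq : forall k, 2 * T - x <> q k)
          by (intros k E; apply nE; right; right; right; right; exists k; lra).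
        apply (has_sum_ext (fun k => e * c k * ind (p k) (q k) (2 * T - x)));
          [intro k; rewrite ind_mirror; auto|].
        apply has_sum_scal_rep; [intro; apply ind_bounds| |].
        { destruct H2 as [S HS]; exists S. eapply has_sum_ext; [|exact HS].
          intro k; simpl; rewrite ind_mirror; auto. }
        intros [S HS]. apply infinite_sum_has_sum. apply NNPP; intro n.
        apply nE; right; right; left; split; [lra|]. intro HH.
        apply n, HH. exists S; apply infinite_sum_has_sum; auto.
Qed.

(** * Mirror extension of solutions *)

Lemma Rabs_unit s : s * s = 1 -> Rabs s = 1.
Proof.
  intros H. destruct (Rle_dec 0 s); [rewrite Rabs_right | rewrite Rabs_left]; nra.
Qed.

Lemma deriv_within_glue_left T f g x l : 0 <= x < T -> deriv_within 0 T f x l ->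
  (forall y, y <= T -> g y = f y) -> deriv_within 0 (2 * T) g x l.
Proof.
  intros Hx D E eps He. destruct (D eps He) as [d [Hd H]].
  exists (Rmin d (T - x)); split; [apply Rmin_glb_lt; lra|]. intros y Hy Hyx Hyd.
  assert (Rabs (y - x) < d) by (eapply Rlt_le_trans; [exact Hyd|apply Rmin_l]).
  assert (Rabs (y - x) < T - x) by (eapply Rlt_le_trans; [exact Hyd|apply Rmin_r]).
  apply Rabs_def2 in H1. rewrite !E by lra. apply H; auto; lra.
Qed.

Lemma deriv_within_glue_right T f g x l s : s * s = 1 -> T < x <= 2 * T ->
  deriv_within 0 T f (2 * T - x) l -> (forall y, T < y -> g y = s * f (2 * T - y)) ->
  deriv_within 0 (2 * T) g x (- s * l).
Proof.
  intros Hs Hx D E eps He. destruct (D eps He) as [d [Hd H]].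
  exists (Rmin d (x - T)); split; [apply Rmin_glb_lt; lra|]. intros y Hy Hyx Hyd.
  assert (Rabs (y - x) < d) by (eapply Rlt_le_trans; [exact Hyd|apply Rmin_l]).
  assert (Rabs (y - x) < x - T) by (eapply Rlt_le_trans; [exact Hyd|apply Rmin_r]).
  apply Rabs_def2 in H1. rewrite !E by lra.
  specialize (H (2 * T - y) ltac:(lra) ltac:(lra)).
  replace (2 * T - y - (2 * T - x)) with (- (y - x)) in H by ring.
  rewrite Rabs_Ropp in H. specialize (H H0).
  replace ((s * f (2 * T - y) - s * f (2 * T - x)) / (y - x) - - s * l)
    with (- s * ((f (2 * T - y) - f (2 * T - x)) / - (y - x) - l)) by (field; lra).
  rewrite Rabs_mult, Rabs_Ropp, Rabs_unit by auto. lra.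
Qed.

Lemma deriv_within_glue_mid T f g l s : 0 < T -> s * s = 1 -> deriv_within 0 T f T l ->
  (forall y, y <= T -> g y = f y) -> (forall y, T < y -> g y = s * f (2 * T - y)) ->
  f T = s * f T -> l = - s * l -> deriv_within 0 (2 * T) g T l.
Proof.
  intros HT Hs D E1 E2 F L eps He. destruct (D eps He) as [d [Hd H]]. exists d; split; auto.
  intros y Hy Hyx Hyd. destruct (Rle_dec y T).
  - rewrite !E1 by lra. apply H; auto; lra.
  - rewrite E2, E1 by lra.
    specialize (H (2 * T - y) ltac:(lra) ltac:(lra)).
    replace (2 * T - y - T) with (- (y - T)) in H by ring.
    rewrite Rabs_Ropp in H. specialize (H Hyd).
    replace ((s * f (2 * T - y) - f T) / (y - T) - l)
      with (- s * ((f (2 * T - y) - f T) / - (y - T) - l)).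
    + rewrite Rabs_mult, Rabs_Ropp, Rabs_unit by auto. lra.
    + symmetry. assert (E4 : - l = s * l) by nra.
      transitivity ((s * f (2 * T - y) - s * f T) / (y - T) + s * l); [|field; lra].
      rewrite <- F. lra.
Qed.

Lemma sum_f_R0_rev F N : sum_f_R0 (fun k => F (N - k)%nat) N = sum_f_R0 F N.
Proof.
  revert F. induction N; intro F; [simpl; auto|].
  rewrite decomp_sum by lia. simpl pred.
  rewrite (sum_eq _ (fun i => F (N - i)%nat)) by (intros; f_equal; lia).
  rewrite IHN. replace (S N - 0)%nat with (S N) by lia. simpl (sum_f_R0 F (S N)). ring.
Qed.

(* Writing [g z = f (min z T) + s f (2T - max z T) - s f T] splits every family of
   intervals into one in [[0, T]] and a reflected one, which is again ordered after reversal. *)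
Lemma abs_cont_mirror T f g s : 0 < T -> s * s = 1 -> abs_cont 0 T f ->
  (forall y, y <= T -> g y = f y) -> (forall y, T < y -> g y = s * f (2 * T - y)) ->
  f T = s * f T -> abs_cont 0 (2 * T) g.
Proof.
  intros HT Hs AC E1 E2 F eps He. destruct (AC (eps / 2)) as [d [Hd H]]; [lra|].
  exists d; split; auto. intros N x y Hxy Hord Hsum.
  assert (Gz : forall z, g z = f (Rmin z T) + s * f (2 * T - Rmax z T) - s * f T).
  { intro z. unfold Rmin, Rmax. destruct (Rle_dec z T).
    - rewrite E1 by lra. replace (2 * T - T) with T by ring. ring.
    - rewrite E2 by lra. lra. }
  assert (L : sum_f_R0 (fun k => Rabs (f (Rmin (y k) T) - f (Rmin (x k) T))) N < eps / 2).
  { apply H.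
    - intros k Hk; destruct (Hxy k Hk) as (h1 & h2 & h3); unfold Rmin; repeat destruct Rle_dec; lra.
    - intros i j Hij; specialize (Hord i j Hij); unfold Rmin; repeat destruct Rle_dec; lra.
    - eapply Rle_lt_trans; [|exact Hsum]. apply sum_Rle; intros k Hk.
      destruct (Hxy k Hk) as (h1 & h2 & h3); unfold Rmin; repeat destruct Rle_dec; lra. }
  assert (Rr : sum_f_R0 (fun k => Rabs (f (2 * T - Rmax (x (N - k)%nat) T) -
                                        f (2 * T - Rmax (y (N - k)%nat) T))) N < eps / 2).
  { apply (H N (fun k => 2 * T - Rmax (y (N - k)%nat) T) (fun k => 2 * T - Rmax (x (N - k)%nat) T)).
    - intros k Hk; destruct (Hxy (N - k)%nat ltac:(lia)) as (h1 & h2 & h3).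
      unfold Rmax; repeat destruct Rle_dec; lra.
    - intros i j Hij; specialize (Hord (N - j)%nat (N - i)%nat ltac:(lia)).
      unfold Rmax; repeat destruct Rle_dec; lra.
    - rewrite (sum_f_R0_rev (fun k => (2 * T - Rmax (x k) T) - (2 * T - Rmax (y k) T)) N).
      eapply Rle_lt_trans; [|exact Hsum]. apply sum_Rle; intros k Hk.
      destruct (Hxy k Hk) as (h1 & h2 & h3); unfold Rmax; repeat destruct Rle_dec; lra. }
  rewrite (sum_f_R0_rev (fun k => Rabs (f (2 * T - Rmax (x k) T) - f (2 * T - Rmax (y k) T))) N) in Rr.
  apply Rle_lt_trans with (sum_f_R0 (fun k => Rabs (f (Rmin (y k) T) - f (Rmin (x k) T))) N +
    sum_f_R0 (fun k => Rabs (f (2 * T - Rmax (x k) T) - f (2 * T - Rmax (y k) T))) N); [|lra].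
  rewrite <- plus_sum. apply sum_Rle; intros k _. rewrite !Gz.
  replace (f (Rmin (y k) T) + s * f (2 * T - Rmax (y k) T) - s * f T -
           (f (Rmin (x k) T) + s * f (2 * T - Rmax (x k) T) - s * f T))
    with ((f (Rmin (y k) T) - f (Rmin (x k) T)) +
          (- s) * (f (2 * T - Rmax (x k) T) - f (2 * T - Rmax (y k) T))) by ring.
  eapply Rle_trans; [apply Rabs_triang|]. rewrite Rabs_mult, Rabs_Ropp, (Rabs_unit s Hs). lra.
Qed.

Lemma scaled_eps_bound al eps : 0 < eps ->
  0 < eps / (2 * (Rabs al + 1)) /\
  forall z, 0 <= z < eps / (2 * (Rabs al + 1)) -> Rabs al * z < eps / 2.
Proof.
  intros He. pose proof (Rabs_pos al). split; [apply Rdiv_lt_0_compat; lra|].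
  intros z [Hz0 Hz]. apply (Rmult_lt_compat_r (2 * (Rabs al + 1))) in Hz; [|lra].
  replace (eps / (2 * (Rabs al + 1)) * (2 * (Rabs al + 1))) with eps in Hz by (field; lra). nra.
Qed.

Lemma deriv_within_lin a b f g x l m al be :
  deriv_within a b f x l -> deriv_within a b g x m ->
  deriv_within a b (fun y => al * f y + be * g y) x (al * l + be * m).
Proof.
  intros Df Dg eps He.
  destruct (scaled_eps_bound al eps He) as [P1 Q1]. destruct (scaled_eps_bound be eps He) as [P2 Q2].
  destruct (Df _ P1) as [d1 [Hd1 H1]]. destruct (Dg _ P2) as [d2 [Hd2 H2]].
  exists (Rmin d1 d2); split; [apply Rmin_glb_lt; auto|]. intros y Hy Hyx Hyd.
  assert (Rabs (y - x) < d1) by (eapply Rlt_le_trans; [exact Hyd|apply Rmin_l]).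
  assert (Rabs (y - x) < d2) by (eapply Rlt_le_trans; [exact Hyd|apply Rmin_r]).
  specialize (H1 y Hy Hyx H). specialize (H2 y Hy Hyx H0).
  replace ((al * f y + be * g y - (al * f x + be * g x)) / (y - x) - (al * l + be * m))
    with (al * ((f y - f x) / (y - x) - l) + be * ((g y - g x) / (y - x) - m))
    by (field; intro; apply Hyx; lra).
  eapply Rle_lt_trans; [apply Rabs_triang|]. rewrite !Rabs_mult.
  pose proof (Q1 _ (conj (Rabs_pos _) H1)). pose proof (Q2 _ (conj (Rabs_pos _) H2)). lra.
Qed.

Lemma abs_cont_lin a b f g al be :
  abs_cont a b f -> abs_cont a b g -> abs_cont a b (fun y => al * f y + be * g y).
Proof.
  intros Af Ag eps He.
  destruct (scaled_eps_bound al eps He) as [P1 Q1]. destruct (scaled_eps_bound be eps He) as [P2 Q2].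
  destruct (Af _ P1) as [d1 [Hd1 H1]]. destruct (Ag _ P2) as [d2 [Hd2 H2]].
  exists (Rmin d1 d2); split; [apply Rmin_glb_lt; auto|]. intros N x y Hxy Hord Hs.
  assert (sum_f_R0 (fun k => y k - x k) N < d1) by (eapply Rlt_le_trans; [exact Hs|apply Rmin_l]).
  assert (sum_f_R0 (fun k => y k - x k) N < d2) by (eapply Rlt_le_trans; [exact Hs|apply Rmin_r]).
  specialize (H1 N x y Hxy Hord H). specialize (H2 N x y Hxy Hord H0).
  assert (P : forall h, 0 <= sum_f_R0 (fun k => Rabs (h (y k) - h (x k))) N)
    by (intro h; apply cond_pos_sum; intro; apply Rabs_pos).
  pose proof (Q1 _ (conj (P f) H1)). pose proof (Q2 _ (conj (P g) H2)).
  apply Rle_lt_trans with (Rabs al * sum_f_R0 (fun k => Rabs (f (y k) - f (x k))) N +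
    Rabs be * sum_f_R0 (fun k => Rabs (g (y k) - g (x k))) N); [|lra].
  rewrite !scal_sum, <- plus_sum. apply sum_Rle; intros k _.
  replace (al * f (y k) + be * g (y k) - (al * f (x k) + be * g (x k)))
    with (al * (f (y k) - f (x k)) + be * (g (y k) - g (x k))) by ring.
  eapply Rle_trans; [apply Rabs_triang|]. rewrite !Rabs_mult. lra.
Qed.

Lemma is_sol_N_lin n a b c s1 s2 u1 u2 al be :
  is_sol n a b c (N_bc n a b) s1 u1 -> is_sol n a b c (N_bc n a b) s2 u2 ->
  is_sol n a b c (N_bc n a b) (fun t => al * s1 t + be * s2 t) (fun t => al * u1 t + be * u2 t).
Proof.
  intros (D1 & E1 & [W1 A1] & B1 & S1) (D2 & E2 & [W2 A2] & B2 & S2).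
  exists (fun k t => al * D1 k t + be * D2 k t). split; [|split; [split|split]].
  - intros x Hx; rewrite E1, E2; auto.
  - intros k x Hk Hx. apply deriv_within_lin; auto.
  - apply abs_cont_lin; auto.
  - intros k Hk. destruct (B1 k Hk), (B2 k Hk). split; [rewrite H, H1 | rewrite H0, H2]; ring.
  - eapply ae_impl; [exact (ae_and _ _ _ _ S1 S2)|]. intros x Hx [[d1 [Hd1 Q1]] [d2 [Hd2 Q2]]].
    exists (al * d1 + be * d2). split; [apply deriv_within_lin; auto|].
    rewrite (fsum_ext _ _ (fun k => al * (c k x * D1 k x) + be * (c k x * D2 k x))) by (intros; ring).
    rewrite fsum_plus, !fsum_scal, <- Q1, <- Q2. ring.
Qed.

Lemma is_sol_rhs_ext n a b c bc s s' u :
  (forall t, s t = s' t) -> is_sol n a b c bc s u -> is_sol n a b c bc s' u.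
Proof.
  intros E (D & H1 & H2 & H3 & H4). exists D; repeat split; auto; try apply H2.
  eapply ae_impl; [exact H4|]. intros x _ [d [Hd Q]]; exists d; split; auto; rewrite <- E; auto.
Qed.

Definition alt_sign (e : R) (k : nat) : R := if Nat.even k then e else - e.

(* The derivatives of [mirror_ext T e u]: differentiating [u (2T - t)] [k] times brings in
   [(-1)^k]. *)
Definition mirror_derivs (T e : R) (D : nat -> R -> R) (k : nat) (t : R) : R :=
  if Rle_dec t T then D k t else alt_sign e k * D k (2 * T - t).

Lemma alt_sign_S e k : alt_sign e (S k) = - alt_sign e k.
Proof. unfold alt_sign. rewrite Nat.even_succ, <- Nat.negb_even. destruct (Nat.even k); simpl; ring. Qed.

Lemma alt_sign_sq e k : e * e = 1 -> alt_sign e k * alt_sign e k = 1.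
Proof. unfold alt_sign; destruct Nat.even; intros; lra. Qed.

Lemma mirror_derivs_le T e D k y : y <= T -> mirror_derivs T e D k y = D k y.
Proof. intros; unfold mirror_derivs; destruct Rle_dec; [auto | lra]. Qed.

Lemma mirror_derivs_gt T e D k y : T < y -> mirror_derivs T e D k y = alt_sign e k * D k (2 * T - y).
Proof. intros; unfold mirror_derivs; destruct Rle_dec; [lra | auto]. Qed.

(* The compatibility [D k T = alt_sign e k * D k T] says that [D k T = 0] whenever the
   mirror image would flip its sign, so the glued derivatives match at [T]. *)
Lemma Wfam_mirror m T e D : 0 < T -> e * e = 1 -> (1 <= m)%nat ->
  (forall k, (k < m)%nat -> D k T = alt_sign e k * D k T) ->
  Wfam 0 T m D -> Wfam 0 (2 * T) m (mirror_derivs T e D).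
Proof.
  intros HT He Hm BT [Hder Hac]. split.
  - intros k x Hk Hx. destruct (Rlt_le_dec x T) as [xT|xT]; [|destruct (Req_dec x T) as [->|xne]].
    + rewrite mirror_derivs_le by lra.
      apply (deriv_within_glue_left T (D k)); [lra | apply Hder; auto; lra | apply mirror_derivs_le].
    + rewrite mirror_derivs_le by lra.
      apply (deriv_within_glue_mid T (D k) _ _ (alt_sign e k)); auto.
      * apply alt_sign_sq; auto.
      * apply Hder; auto; lra.
      * apply mirror_derivs_le.
      * apply mirror_derivs_gt.
      * apply BT; lia.
      * rewrite <- alt_sign_S. apply BT; auto.
    + rewrite mirror_derivs_gt, alt_sign_S by lra.
      apply (deriv_within_glue_right T (D k)); [apply alt_sign_sq; auto | lra | apply Hder; auto; lra |].
      apply mirror_derivs_gt.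
  - apply (abs_cont_mirror T (D (pred m)) _ (alt_sign e (pred m))); auto.
    + apply alt_sign_sq; auto.
    + apply mirror_derivs_le.
    + apply mirror_derivs_gt.
    + apply BT; lia.
Qed.

(* [refl_coef] flips exactly the odd coefficients, which cancels the signs of [mirror_derivs];
   the top derivative has odd order, so it is multiplied by [e] like the right-hand side. *)
Lemma solves_mirror n T e c D s : 0 < T -> e * e = 1 -> (1 <= n)%nat ->
  solves 0 T (2 * n) c D s ->
  solves 0 (2 * T) (2 * n) (refl_coef T c) (mirror_derivs T e D) (mirror_ext T e s).
Proof.
  intros HT He Hn Hsol.
  assert (Hpred : alt_sign e (pred (2 * n)) = - e).
  { unfold alt_sign. replace (pred (2 * n)) with (S (2 * (n - 1))) by lia.
    rewrite even_succ_double. reflexivity. }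
  set (Q := fun t => exists d, deriv_within 0 T (D (pred (2 * n))) t d /\
    d + fsum (2 * n) (fun k => c k t * D k t) = s t).
  eapply null_subset; [|apply (null_union _ _ (null_range (fun _ => T))
    (null_union _ _ Hsol (null_reflect _ (2 * T) Hsol)))].
  intros x [Hx nQ]. apply NNPP; intro N. apply nQ.
  destruct (Req_dec x T) as [xe|xne]; [exfalso; apply N; left; exists O; auto|].
  destruct (Rle_dec x T) as [xT|xT].
  - assert (Qx : Q x) by (apply NNPP; intro nq; apply N; right; left; split; [lra|auto]).
    destruct Qx as [d [Hd Hq]]. exists d. split.
    + apply (deriv_within_glue_left T (D (pred (2 * n)))); auto; [lra | apply mirror_derivs_le].
    + rewrite (fsum_ext _ _ (fun k => c k x * D k x)).
      { unfold mirror_ext; destruct Rle_dec; [auto | lra]. }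
      intros k _. unfold refl_coef. destruct Rle_dec; [|lra]. rewrite mirror_derivs_le; auto.
  - assert (Qx : Q (2 * T - x))
      by (apply NNPP; intro nq; apply N; right; right; split; [lra|auto]).
    destruct Qx as [d [Hd Hq]]. exists (e * d). split.
    + replace (e * d) with (- alt_sign e (pred (2 * n)) * d) by (rewrite Hpred; ring).
      apply (deriv_within_glue_right T (D (pred (2 * n)))); auto; [apply alt_sign_sq; auto | lra |].
      apply mirror_derivs_gt.
    + rewrite (fsum_ext _ _ (fun k => e * (c k (2 * T - x) * D k (2 * T - x)))).
      { rewrite fsum_scal. unfold mirror_ext; destruct Rle_dec; [lra|]. rewrite <- Hq; ring. }
      intros k _. unfold refl_coef. destruct Rle_dec; [lra|].
      rewrite mirror_derivs_gt by lra. unfold alt_sign. destruct (Nat.even k); ring.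
Qed.

Lemma is_sol_mirror n T c bc s u e : 0 < T -> e * e = 1 -> (1 <= n)%nat ->
  (forall D, bc D -> (forall k, (k < n)%nat -> D (2 * k + 1)%nat 0 = 0) /\
     (forall k, (k < 2 * n)%nat -> D k T = alt_sign e k * D k T)) ->
  is_sol n 0 T c bc s u ->
  is_sol n 0 (2 * T) (refl_coef T c) (N_bc n 0 (2 * T)) (mirror_ext T e s) (mirror_ext T e u).
Proof.
  intros HT He Hn Hbc (D & HD0 & HW & HB & Hsol). destruct (Hbc D HB) as [B0 BT].
  exists (mirror_derivs T e D). split; [|split; [|split]].
  - intros x Hx. unfold mirror_derivs, mirror_ext. destruct Rle_dec; rewrite HD0 by lra; reflexivity.
  - apply Wfam_mirror; auto. lia.
  - intros k Hk. rewrite mirror_derivs_le, mirror_derivs_gt by lra.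
    replace (2 * T - 2 * T) with 0 by ring. rewrite B0 by auto. split; ring.
  - apply solves_mirror; auto.
Qed.

Lemma ae_mirror T P : 0 < T -> ae 0 T P ->
  ae 0 (2 * T) (fun x => P (if Rle_dec x T then x else 2 * T - x)).
Proof.
  intros HT H. eapply null_subset; [|exact (null_union _ _ H (null_reflect _ (2 * T) H))].
  intros x [Hx nP]. destruct (Rle_dec x T); [left | right]; split; auto; lra.
Qed.

Lemma N_bc_mirror_compat n T D : N_bc n 0 T D ->
  (forall k, (k < n)%nat -> D (2 * k + 1)%nat 0 = 0) /\
  (forall k, (k < 2 * n)%nat -> D k T = alt_sign 1 k * D k T).
Proof.
  intros H. split; [intros k Hk; apply (H k Hk)|].
  intros k Hk. destruct (Nat.Even_or_Odd k) as [[j ->]|[j ->]].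
  - unfold alt_sign; rewrite even_double; ring.
  - rewrite (proj2 (H j ltac:(lia))). ring.
Qed.

Lemma M1_bc_mirror_compat n T D : M1_bc n 0 T D ->
  (forall k, (k < n)%nat -> D (2 * k + 1)%nat 0 = 0) /\
  (forall k, (k < 2 * n)%nat -> D k T = alt_sign (-1) k * D k T).
Proof.
  intros H. split; [intros k Hk; apply (H k Hk)|].
  intros k Hk. destruct (Nat.Even_or_Odd k) as [[j ->]|[j ->]].
  - rewrite (proj2 (H j ltac:(lia))). ring.
  - unfold alt_sign. replace (2 * j + 1)%nat with (S (2 * j)) by lia.
    rewrite even_succ_double; ring.
Qed.

(** * Comparison of the Neumann and mixed problems *)

Section Comparison.

Variables (n : nat) (T : R) (c : nat -> R -> R) (GN2 : R -> R -> R) (s1 s2 uN uM : R -> R).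
Hypotheses (hn : (1 <= n)%nat) (hT : 0 < T)
  (hGN2 : Green n 0 (2 * T) (refl_coef T c) (N_bc n 0 (2 * T)) GN2)
  (hs1 : L1 0 T s1) (hs2 : L1 0 T s2)
  (huN : is_sol n 0 T c (N_bc n 0 T) s1 uN)
  (huM : is_sol n 0 T c (M1_bc n 0 T) s2 uM).

(* Nonresonance on [[0, 2T]] identifies the mirrored combination with the Green integral. *)
Lemma combination_representation a b t : 0 <= t <= T ->
  has_integral 0 (2 * T)
    (fun x => GN2 t x * (a * mirror_ext T 1 s1 x + b * mirror_ext T (-1) s2 x))
    (a * uN t + b * uM t).
Proof.
  intros Ht. destruct hGN2 as [NR Hex].
  assert (L : L1 0 (2 * T) (fun x => a * mirror_ext T 1 s1 x + b * mirror_ext T (-1) s2 x)).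
  { destruct (L1_mirror_ext T 1 s1 hT hs1) as [I1 H1].
    destruct (L1_mirror_ext T (-1) s2 hT hs2) as [I2 H2].
    eexists; apply has_integral_lin; eauto. }
  destruct (Hex _ L) as [w [Hw Hrep]].
  pose proof (is_sol_mirror n T c _ s1 uN 1 hT ltac:(lra) hn (N_bc_mirror_compat n T) huN) as EN.
  pose proof (is_sol_mirror n T c _ s2 uM (-1) hT ltac:(lra) hn (M1_bc_mirror_compat n T) huM) as EM.
  pose proof (is_sol_N_lin _ _ _ _ _ _ _ _ 1 (-1) Hw (is_sol_N_lin _ _ _ _ _ _ _ _ a b EN EM)) as Ed.
  apply (is_sol_rhs_ext _ _ _ _ _ _ (fun _ => 0)) in Ed; [|intro; ring].
  specialize (NR _ Ed t ltac:(lra)). specialize (Hrep t ltac:(lra)).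
  unfold mirror_ext in NR. destruct Rle_dec in NR; [|lra].
  replace (a * uN t + b * uM t) with (w t) by lra. exact Hrep.
Qed.

(* [a s1 - b s2] is the combination seen by the reflected half of [[0, 2T]]. *)
Lemma combination_nonneg g a b t (P : R -> Prop) : g * g = 1 -> 0 <= t <= T ->
  (forall x, 0 <= x <= 2 * T -> 0 <= g * GN2 t x) -> ae 0 T P ->
  (forall x, P x -> 0 <= g * (a * s1 x + b * s2 x) /\ 0 <= g * (a * s1 x - b * s2 x)) ->
  0 <= a * uN t + b * uM t.
Proof.
  intros Hg Ht HG HP HPs.
  assert (Hs : ae 0 T (fun x => 0 <= g * (a * s1 x + b * s2 x) /\ 0 <= g * (a * s1 x - b * s2 x)))
    by (eapply ae_impl; [exact HP|]; auto).
  apply (integral_nonneg 0 (2 * T) _ _ ltac:(lra) (combination_representation a b t Ht)).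
  eapply ae_impl; [exact (ae_mirror T _ hT Hs)|]. intros x Hx Hp.
  specialize (HG x Hx).
  assert (E : forall X, GN2 t x * X = (g * GN2 t x) * (g * X)).
  { intro X. replace (g * GN2 t x * (g * X)) with ((g * g) * (GN2 t x * X)) by ring.
    rewrite Hg; ring. }
  rewrite E. apply Rmult_le_pos; auto.
  unfold mirror_ext. cbv beta in Hp. destruct (Rle_dec x T); lra.
Qed.

End Comparison.

(* The Green's functions on [[0, T]] and the [L^al] bounds on the coefficients are not
   needed: the solutions [uN] and [uM] are given. *)
Theorem theorem6p4 (n : nat) (T al : R) (c : nat -> R -> R)
  (hn : (1 <= n)%nat) (hT : 0 < T) (hal : 1 <= al)
  (hc : forall k, (k < 2 * n)%nat -> Lp al 0 T (c k))
  (GN2 : R -> R -> R)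
  (hGN2 : Green n 0 (2 * T) (refl_coef T c) (N_bc n 0 (2 * T)) GN2)
  (hGN : exists G, Green n 0 T c (N_bc n 0 T) G)
  (hGM : exists G, Green n 0 T c (M1_bc n 0 T) G)
  (s1 s2 uN uM : R -> R)
  (hs1 : L1 0 T s1) (hs2 : L1 0 T s2)
  (huN : is_sol n 0 T c (N_bc n 0 T) s1 uN)
  (huM : is_sol n 0 T c (M1_bc n 0 T) s2 uM) :
  ((forall t s, 0 <= t <= 2 * T -> 0 <= s <= 2 * T -> 0 <= GN2 t s) ->
     ae 0 T (fun t => Rabs (s2 t) <= s1 t) ->
     forall t, 0 <= t <= T -> Rabs (uM t) <= uN t) /\
  ((forall t s, 0 <= t <= 2 * T -> 0 <= s <= 2 * T -> GN2 t s <= 0) ->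
     ae 0 T (fun t => 0 <= s2 t <= s1 t) ->
     forall t, 0 <= t <= T -> uN t <= 0 /\ uN t <= uM t) /\
  ((forall t s, 0 <= t <= 2 * T -> 0 <= s <= 2 * T -> GN2 t s <= 0) ->
     ae 0 T (fun t => s1 t <= s2 t <= 0) ->
     forall t, 0 <= t <= T -> 0 <= uN t /\ uM t <= uN t).
Proof.
  pose proof (combination_nonneg n T c GN2 s1 s2 uN uM hn hT hGN2 hs1 hs2 huN huM) as Hcomb.
  split; [|split]; intros HG Hs t Ht.
  - assert (HG1 : forall x, 0 <= x <= 2 * T -> 0 <= 1 * GN2 t x)
      by (intros x Hx; specialize (HG t x ltac:(lra) Hx); lra).
    assert (0 <= 1 * uN t + 1 * uM t /\ 0 <= 1 * uN t + -1 * uM t).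
    { split; [apply (Hcomb 1 1 1 t _ ltac:(lra) Ht HG1 Hs) | apply (Hcomb 1 1 (-1) t _ ltac:(lra) Ht HG1 Hs)];
        intros x Hx; unfold Rabs in Hx; destruct Rcase_abs in Hx; split; lra. }
    apply Rabs_le; lra.
  - assert (HG1 : forall x, 0 <= x <= 2 * T -> 0 <= -1 * GN2 t x)
      by (intros x Hx; specialize (HG t x ltac:(lra) Hx); lra).
    assert (0 <= -1 * uN t + 0 * uM t /\ 0 <= -1 * uN t + 1 * uM t).
    { split; [apply (Hcomb (-1) (-1) 0 t _ ltac:(lra) Ht HG1 Hs) | apply (Hcomb (-1) (-1) 1 t _ ltac:(lra) Ht HG1 Hs)];
        intros x Hx; split; lra. }
    lra.
  - assert (HG1 : forall x, 0 <= x <= 2 * T -> 0 <= -1 * GN2 t x)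
      by (intros x Hx; specialize (HG t x ltac:(lra) Hx); lra).
    assert (0 <= 1 * uN t + 0 * uM t /\ 0 <= 1 * uN t + -1 * uM t).
    { split; [apply (Hcomb (-1) 1 0 t _ ltac:(lra) Ht HG1 Hs) | apply (Hcomb (-1) 1 (-1) t _ ltac:(lra) Ht HG1 Hs)];
        intros x Hx; split; lra. }
    lra.
Qed.
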